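(* Consider the nonatomic game with tolls, with cost densities $\bar c_{lj}(\mathbf{m})=g_{lj}c(m_j)+\gamma_l\sum_{i=1}^L m_{ij}g_{ij}c'(m_j)$, and suppose $h_{lj}=h_j$ for all $l\in\mathcal{L}$, $j\in\mathcal{N}$. Then every Nash equilibrium of this game is system optimal, i.e., minimizes $C(\mathbf{m})=\sum_{j\in\mathcal{N}}\sum_{l=1}^L m_{lj}g_{lj}c(m_j)$ over all congestion profiles.
   Context: Nonatomic model: classes $\mathcal{L}=\{1,\dots,L\}$ of nonatomic mobiles, class $l$ having total mass $M_l>0$, target SINR density $\gamma_l>0$ and power gain $h_{lj}>0$ to BS $j\in\mathcal{N}=\{1,\dots,N\}$; noise power $\sigma^2>0$. A congestion profile is $\mathbf{m}=(m_{lj})$ with $m_{lj}\ge0$, $\sum_j m_{lj}=M_l$. Set $m_j=\sum_l\gamma_l m_{lj}$, $g_{lj}=\gamma_l\sigma^2/h_{lj}$, $c(z)=1/(1-z)$ for $z<1$ and $c(z)=\infty$ for $z\ge1$, $c'(z)=1/(1-z)^2$ for $z<1$ and $c'(z)=\infty$ for $z\ge1$. $\mathbf{m}$ is a Nash equilibrium if for all $l,j$, $m_{lj}>0$ implies $\bar c_{lj}(\mathbf{m})\le \bar c_{lk}(\mathbf{m})$ for all $k$. Standing feasibility assumption: $\sum_l\gamma_l M_l<N$. *)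

From HB Require Import structures.
From mathcomp Require Import all_boot all_order all_algebra.
From mathcomp Require Import all_classical all_reals ereal.
Set Implicit Arguments. Unset Strict Implicit. Unset Printing Implicit Defensive.
Import Order.TTheory GRing.Theory Num.Theory.
Local Open Scope ring_scope.
Local Open Scope ereal_scope.

Section Model.
Context {R : realType} {L N : nat}.

Definition cE (z : R) : \bar R :=
  if (z < 1)%R then ((1 - z)^-1)%:E else +oo.

Definition dcE (z : R) : \bar R :=
  if (z < 1)%R then (((1 - z) ^+ 2)^-1)%:E else +oo.

Definition gcoef (gamma : 'I_L -> R) (sigma2 : R) (h : 'I_L -> 'I_N -> R)
  (l : 'I_L) (j : 'I_N) : R := (gamma l * sigma2 / h l j)%R.

Definition is_profile (M : 'I_L -> R) (m : 'I_L -> 'I_N -> R) : Prop :=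
  (forall l j, (0 <= m l j)%R) /\ (forall l, (\sum_(j < N) m l j)%R = M l).

Definition load (gamma : 'I_L -> R) (m : 'I_L -> 'I_N -> R) (j : 'I_N) : R :=
  (\sum_(l < L) gamma l * m l j)%R.

(* toll cost density
   cbar_{lj}(m) = g_{lj} c(m_j) + gamma_l sum_i m_{ij} g_{ij} c'(m_j)
   (extended-real arithmetic, with the convention 0 * (+oo) = 0) *)
Definition cbar (gamma : 'I_L -> R) (sigma2 : R) (h : 'I_L -> 'I_N -> R)
  (m : 'I_L -> 'I_N -> R) (l : 'I_L) (j : 'I_N) : \bar R :=
  (gcoef gamma sigma2 h l j)%:E * cE (load gamma m j)
  + (gamma l)%:E *
    (\sum_(i < L) (m i j * gcoef gamma sigma2 h i j)%:E * dcE (load gamma m j)).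

Definition is_NE (M : 'I_L -> R) (gamma : 'I_L -> R) (sigma2 : R)
  (h : 'I_L -> 'I_N -> R) (m : 'I_L -> 'I_N -> R) : Prop :=
  is_profile M m /\
  forall l j, (0 < m l j)%R ->
    forall k, cbar gamma sigma2 h m l j <= cbar gamma sigma2 h m l k.

Definition Csoc (gamma : 'I_L -> R) (sigma2 : R) (h : 'I_L -> 'I_N -> R)
  (m : 'I_L -> 'I_N -> R) : \bar R :=
  \sum_(j < N) \sum_(l < L)
     (m l j * gcoef gamma sigma2 h l j)%:E * cE (load gamma m j).

End Model.

From HB Require Import structures.
From mathcomp Require Import all_boot all_order all_algebra.
From mathcomp Require Import all_classical all_reals ereal.
From mathcomp Require Import ring.
Import Order.TTheory GRing.Theory Num.Theory.
Local Open Scope ring_scope.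
Local Open Scope ereal_scope.

(* With common gains, g_{lj} = gamma_l a_j, so the social cost of cell j is
   a_j f(m_j) with f(z) = z / (1 - z), and the toll cost density is
   gamma_l a_j f'(m_j): the tolls make every user pay the marginal social
   cost.  At an equilibrium no cell is saturated (otherwise a used cell has
   infinite cost, hence so do all cells, contradicting sum_l gamma_l M_l < N),
   each class only uses cells of minimal marginal cost, and convexity of f
   then says the equilibrium minimizes the linearization of C, hence C. *)

Lemma ratio_tangent_le (R : realFieldType) (x y : R) :
  (0 <= x)%R -> (x < 1)%R -> (y < 1)%R ->
  (((1 - x)^-1 + x * ((1 - x) ^+ 2)^-1) * (y - x) <= y / (1 - y) - x / (1 - x))%R.
Proof.
move=> x_ge0 x_lt1 y_lt1.
have x'_gt0 : (0 < 1 - x)%R by rewrite subr_gt0.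
have y'_gt0 : (0 < 1 - y)%R by rewrite subr_gt0.
rewrite -subr_ge0.
have -> : (y / (1 - y) - x / (1 - x) - ((1 - x)^-1 + x * ((1 - x) ^+ 2)^-1) * (y - x)
   = (y - x) ^+ 2 / ((1 - x) ^+ 2 * (1 - y)))%R.
  by field; rewrite ?mulf_neq0 ?expf_neq0 // ?lt0r_neq0.
by rewrite divr_ge0 ?sqr_ge0 // mulr_ge0 ?sqr_ge0 // ltW.
Qed.

Lemma sum_le_of_supported_min (R : realDomainType) (n : nat) (e x y : 'I_n -> R) :
  (forall j, 0 <= x j)%R -> (forall j, 0 <= y j)%R ->
  (\sum_j x j = \sum_j y j)%R ->
  (forall j k, 0 < x j -> e j <= e k)%R ->
  (\sum_j e j * x j <= \sum_j e j * y j)%R.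
Proof.
move=> x_ge0 y_ge0 sum_xy e_min.
case/boolP: [exists j, (0 < x j)%R] => [/existsP [j0 xj0_gt0] | /existsPn x_le0].
  have -> : ((\sum_j e j * x j) = e j0 * \sum_j y j)%R.
    rewrite -sum_xy mulr_sumr; apply: eq_bigr => j _.
    have [xj_gt0 | xj_le0] := ltP 0%R (x j).
      by rewrite (@le_anti _ _ (e j) (e j0)) // !(e_min j) ?(e_min j0).
    by rewrite (@le_anti _ _ (x j) 0%R) ?xj_le0 ?x_ge0 // !mulr0.
  by rewrite mulr_sumr ler_sum // => j _; rewrite ler_wpM2r ?e_min.
have x_eq0 j : x j = 0%R by apply: le_anti; rewrite x_ge0 leNgt x_le0.
have sum_y_eq0 : (\sum_j y j = 0)%R by rewrite -sum_xy big1.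
have y_eq0 j : y j = 0%R by apply: (psumr_eq0P _ sum_y_eq0) => // k _; apply: y_ge0.
by rewrite !big1 // => j _; rewrite ?x_eq0 ?y_eq0 mulr0.
Qed.

Lemma cE_lt1 (R : realType) (z : R) : (z < 1)%R -> cE z = ((1 - z)^-1)%:E.
Proof. by rewrite /cE => ->. Qed.

Lemma cE_ge1 (R : realType) (z : R) : (1 <= z)%R -> cE z = +oo.
Proof. by rewrite /cE leNgt => /negbTE ->. Qed.

Lemma dcE_lt1 (R : realType) (z : R) : (z < 1)%R -> dcE z = (((1 - z) ^+ 2)^-1)%:E.
Proof. by rewrite /dcE => ->. Qed.

Lemma cE_ge0 (R : realType) (z : R) : 0 <= cE z.
Proof.
rewrite /cE; case: ifP => z_lt1; last exact: leey.
by rewrite lee_fin invr_ge0 ltW // subr_gt0.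
Qed.

Lemma dcE_ge0 (R : realType) (z : R) : 0 <= dcE z.
Proof.
rewrite /dcE; case: ifP => z_lt1; last exact: leey.
by rewrite lee_fin invr_ge0 ltW // exprn_gt0 // subr_gt0.
Qed.

Lemma ge0_neqNy (R : realDomainType) (x : \bar R) : 0 <= x -> x != -oo.
Proof. by case: x. Qed.

Section CommonGains.
Context {R : realType} {L N : nat} {gamma : 'I_L -> R} {sigma2 : R}.
Context {h : 'I_L -> 'I_N -> R} {a : 'I_N -> R}.
Hypothesis gamma_gt0 : forall l, (0 < gamma l)%R.
Hypothesis a_gt0 : forall j, (0 < a j)%R.
Hypothesis gcoefE : forall l j, gcoef gamma sigma2 h l j = (gamma l * a j)%R.

Lemma gcoef_gt0 l j : (0 < gcoef gamma sigma2 h l j)%R.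
Proof. by rewrite gcoefE mulr_gt0. Qed.

Lemma load_ge0 (m : 'I_L -> 'I_N -> R) j :
  (forall l j, 0 <= m l j)%R -> (0 <= load gamma m j)%R.
Proof. by move=> m_ge0; apply: sumr_ge0 => l _; rewrite mulr_ge0 // ltW. Qed.

Lemma sum_load {M : 'I_L -> R} {m : 'I_L -> 'I_N -> R} :
  (forall l, \sum_(j < N) m l j = M l)%R ->
  (\sum_(j < N) load gamma m j = \sum_(l < L) gamma l * M l)%R.
Proof.
move=> sum_m; rewrite /load exchange_big; apply: eq_bigr => l _.
by rewrite -mulr_sumr sum_m.
Qed.

Lemma sum_gcoef_load (m : 'I_L -> 'I_N -> R) j :
  (\sum_(l < L) m l j * gcoef gamma sigma2 h l j = a j * load gamma m j)%R.
Proof. by rewrite /load mulr_sumr; apply: eq_bigr => l _; rewrite gcoefE; ring. Qed.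

Lemma saturated_cell_used (m : 'I_L -> 'I_N -> R) j :
  (forall l j, 0 <= m l j)%R -> (1 <= load gamma m j)%R -> exists l, (0 < m l j)%R.
Proof.
move=> m_ge0 load_ge1.
case/boolP: [exists l, (0 < m l j)%R] => [/existsP // | /existsPn m_le0].
suff : (load gamma m j <= 0)%R by move/(le_trans load_ge1); rewrite ler10.
by apply: sumr_le0 => l _; rewrite mulr_ge0_le0 ?(ltW (gamma_gt0 l)) // leNgt m_le0.
Qed.

Lemma Csoc_unsaturated (m : 'I_L -> 'I_N -> R) :
  (forall j, load gamma m j < 1)%R ->
  Csoc gamma sigma2 h m =
  (\sum_(j < N) a j * (load gamma m j / (1 - load gamma m j)))%:E.
Proof.
move=> load_lt1; rewrite /Csoc -sumEFin; apply: eq_bigr => j _.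
rewrite cE_lt1 //; under eq_bigr do rewrite -EFinM.
by rewrite sumEFin -mulr_suml sum_gcoef_load mulrA.
Qed.

Lemma Csoc_saturated (m : 'I_L -> 'I_N -> R) j :
  (forall l j, 0 <= m l j)%R -> (1 <= load gamma m j)%R -> Csoc gamma sigma2 h m = +oo.
Proof.
move=> m_ge0 load_ge1; have [l ml_gt0] := saturated_cell_used m j m_ge0 load_ge1.
have term_ge0 k i : 0 <= (m i k * gcoef gamma sigma2 h i k)%:E * cE (load gamma m k).
  by rewrite mule_ge0 ?cE_ge0 // lee_fin mulr_ge0 // ltW // gcoef_gt0.
apply/esum_eqyP => [k _|]; first by rewrite ge0_neqNy // sume_ge0.
exists j; split; rewrite ?mem_index_enum //.
apply/esum_eqyP => [i _|]; first exact/ge0_neqNy/term_ge0.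
exists l; split; rewrite ?mem_index_enum //.
by rewrite cE_ge1 // gt0_muley // lte_fin mulr_gt0 ?gcoef_gt0.
Qed.

Definition marginal_cost (m : 'I_L -> 'I_N -> R) j : R :=
  let z := load gamma m j in a j * ((1 - z)^-1 + z * ((1 - z) ^+ 2)^-1).

Lemma cbar_unsaturated (m : 'I_L -> 'I_N -> R) l k : (load gamma m k < 1)%R ->
  cbar gamma sigma2 h m l k = (gamma l * marginal_cost m k)%:E.
Proof.
move=> load_lt1; rewrite /cbar cE_lt1 // dcE_lt1 //.
under eq_bigr do rewrite -EFinM.
rewrite sumEFin -!EFinM -EFinD -mulr_suml sum_gcoef_load gcoefE /marginal_cost.
by congr EFin; ring.
Qed.

Lemma cbar_saturated (m : 'I_L -> 'I_N -> R) l j :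
  (forall l j, 0 <= m l j)%R -> (1 <= load gamma m j)%R -> (0 < m l j)%R ->
  cbar gamma sigma2 h m l j = +oo.
Proof.
move=> m_ge0 load_ge1 ml_gt0.
rewrite /cbar cE_ge1 // gt0_muley ?lte_fin ?gcoef_gt0 // addye // ge0_neqNy //.
apply: mule_ge0; first by rewrite lee_fin ltW.
apply: sume_ge0 => i _.
by rewrite mule_ge0 ?dcE_ge0 // lee_fin mulr_ge0 // ltW // gcoef_gt0.
Qed.

Context {M : 'I_L -> R} {m : 'I_L -> 'I_N -> R}.
Hypothesis feasible : (\sum_(l < L) gamma l * M l < N%:R)%R.
Hypothesis NE : is_NE M gamma sigma2 h m.

Lemma NE_unsaturated j : (load gamma m j < 1)%R.
Proof.
have [[m_ge0 sum_m] NE_le] := NE.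
rewrite ltNge; apply/negP => load_ge1.
have all_saturated k : (1 <= load gamma m k)%R.
  rewrite leNgt; apply/negP => loadk_lt1.
  have [l ml_gt0] := saturated_cell_used m j m_ge0 load_ge1.
  by have := NE_le l j ml_gt0 k; rewrite cbar_saturated // cbar_unsaturated.
have : (N%:R <= \sum_(l < L) gamma l * M l)%R.
  by rewrite -(sum_load sum_m) -[X in X%:R]card_ord -sumr_const ler_sum.
by rewrite leNgt feasible.
Qed.

Lemma NE_marginal_cost_min l j k :
  (0 < m l j)%R -> (marginal_cost m j <= marginal_cost m k)%R.
Proof.
move=> ml_gt0; have := NE.2 l j ml_gt0 k.
by rewrite !cbar_unsaturated ?NE_unsaturated // lee_fin ler_pM2l.
Qed.

Lemma NE_linearization_le (m' : 'I_L -> 'I_N -> R) : is_profile M m' ->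
  (\sum_j marginal_cost m j * load gamma m j <=
   \sum_j marginal_cost m j * load gamma m' j)%R.
Proof.
have [[m_ge0 sum_m] _] := NE; move=> [m'_ge0 sum_m'].
have split_classes (p : 'I_L -> 'I_N -> R) : ((\sum_j marginal_cost m j * load gamma p j)
    = \sum_l gamma l * \sum_j marginal_cost m j * p l j)%R.
  rewrite /load; under eq_bigr do rewrite mulr_sumr.
  rewrite exchange_big; apply: eq_bigr => l _.
  by rewrite mulr_sumr; apply: eq_bigr => j _; ring.
rewrite !split_classes ler_sum // => l _; rewrite ler_wpM2l ?(ltW (gamma_gt0 l)) //.
apply: sum_le_of_supported_min => // [|j k]; first by rewrite sum_m sum_m'.
exact: NE_marginal_cost_min.
Qed.

Lemma NE_Csoc_le (m' : 'I_L -> 'I_N -> R) : is_profile M m' ->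
  Csoc gamma sigma2 h m <= Csoc gamma sigma2 h m'.
Proof.
move=> m'_prof; have [m'_ge0 _] := m'_prof; have [[m_ge0 _] _] := NE.
case/boolP: [exists j, (1 <= load gamma m' j)%R] => [/existsP [j load'_ge1] | /existsPn].
  by rewrite (Csoc_saturated m' j m'_ge0 load'_ge1) leey.
move=> load'_lt1; have {}load'_lt1 j : (load gamma m' j < 1)%R by rewrite ltNge.
rewrite (Csoc_unsaturated m NE_unsaturated) (Csoc_unsaturated m' load'_lt1).
rewrite lee_fin -subr_ge0 -sumrB.
have linearization_ge0 :
    (0 <= \sum_j marginal_cost m j * (load gamma m' j - load gamma m j))%R.
  by under eq_bigr do rewrite mulrBr; rewrite sumrB subr_ge0 NE_linearization_le.
apply: (le_trans linearization_ge0); apply: ler_sum => j _.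
rewrite -mulrBr /marginal_cost -mulrA ler_wpM2l ?(ltW (a_gt0 j)) //.
by rewrite ratio_tangent_le ?NE_unsaturated ?load_ge0.
Qed.

End CommonGains.

Theorem proposition13 (R : realType) (L N : nat)
  (M gamma : 'I_L -> R) (h : 'I_L -> 'I_N -> R) (sigma2 : R)
  (hM : forall l, (0 < M l)%R) (hgamma : forall l, (0 < gamma l)%R)
  (hh : forall l j, (0 < h l j)%R) (hsigma : (0 < sigma2)%R)
  (hfeas : (\sum_(l < L) gamma l * M l < N%:R)%R)
  (hN : 'I_N -> R) (hcommon : forall l j, h l j = hN j)
  (m : 'I_L -> 'I_N -> R) :
  is_NE M gamma sigma2 h m ->
  forall m' : 'I_L -> 'I_N -> R, is_profile M m' ->
    Csoc gamma sigma2 h m <= Csoc gamma sigma2 h m'.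
Proof.
move=> NE m' m'_prof.
have [L0 | L_gt0] := posnP L.
  by rewrite /Csoc !big1 // => j _; apply: big1 => l _;
     have := ltn_ord l; rewrite [X in (_ < X)%N]L0.
have a_gt0 j : (0 < sigma2 / hN j)%R by rewrite divr_gt0 // -(hcommon (Ordinal L_gt0)).
have gcoefE l j : gcoef gamma sigma2 h l j = (gamma l * (sigma2 / hN j))%R.
  by rewrite /gcoef hcommon mulrA.
exact: (NE_Csoc_le hgamma a_gt0 gcoefE hfeas NE m' m'_prof).
Qed.
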